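(* The category of domain-complete spaces with continuous maps, and the category of LCS-complete spaces with continuous maps, do not have all coequalizers: in each of them there is a pair of parallel morphisms with no coequalizer.
   Context: A space is domain-complete (resp. LCS-complete) if it is homeomorphic to a $G_\delta$ subset (countable intersection of open sets), with the subspace topology, of some continuous dcpo with its Scott topology (resp. of some locally compact sober space, locally compact meaning every point has a neighborhood base of compact saturated sets). *)

From Stdlib Require Import List.

Set Implicit Arguments.

Record Top := MkTop {
  carrier :> Type;
  open : (carrier -> Prop) -> Prop;
  open_full : open (fun _ => True);
  open_inter : forall U V, open U -> open V -> open (fun x => U x /\ V x);
  open_union : forall F : (carrier -> Prop) -> Prop,
      (forall U, F U -> open U) -> open (fun x => exists U, F U /\ U x)
}.

Definition continuous {X Y : Top} (f : X -> Y) : Prop :=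
  forall V, open Y V -> open X (fun x => V (f x)).

Definition homeomorphic (X Y : Top) : Prop :=
  exists (h : X -> Y) (k : Y -> X),
    continuous h /\ continuous k /\
    (forall x, k (h x) = x) /\ (forall y, h (k y) = y).

Section Subspace.
Variables (X : Top) (G : X -> Prop).
Definition sub_open (V : {x : X | G x} -> Prop) : Prop :=
  exists U, open X U /\ forall z, V z <-> U (proj1_sig z).

Lemma sub_open_full : sub_open (fun _ => True).
Proof. exists (fun _ => True); split; [apply open_full | tauto]. Qed.

Lemma sub_open_inter U V : sub_open U -> sub_open V -> sub_open (fun x => U x /\ V x).
Proof.
  intros [U' [HU HU']] [V' [HV HV']]. exists (fun x => U' x /\ V' x).
  split; [apply open_inter; assumption|]. intros z. rewrite HU', HV'. tauto.
Qed.

Lemma sub_open_union (F : ({x : X | G x} -> Prop) -> Prop) :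
  (forall U, F U -> sub_open U) -> sub_open (fun x => exists U, F U /\ U x).
Proof.
  intros HF.
  exists (fun x => exists U', (open X U' /\ exists V, F V /\ forall z, V z <-> U' (proj1_sig z)) /\ U' x).
  split.
  - apply (@open_union X (fun U' => open X U' /\ exists V, F V /\ forall z, V z <-> U' (proj1_sig z))).
    tauto.
  - intros z; split.
    + intros [V [FV Vz]]. destruct (HF V FV) as [U' [HU' HVU]].
      exists U'. split; [split; [assumption| exists V; split; assumption]|]. apply HVU; assumption.
    + intros [U' [[_ [V [FV HVU]]] Uz]]. exists V. split; [assumption|]. apply HVU; assumption.
Qed.

Definition subspace : Top :=
  @MkTop {x : X | G x} sub_open sub_open_full sub_open_inter sub_open_union.
End Subspace.

Definition G_delta {X : Top} (G : X -> Prop) : Prop :=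
  exists U : nat -> X -> Prop, (forall n, open X (U n)) /\
    forall x, G x <-> (forall n, U n x).

Section Order.
Variables (D : Type) (le : D -> D -> Prop).

Definition directed (S : D -> Prop) : Prop :=
  (exists s, S s) /\
  forall a b, S a -> S b -> exists c, S c /\ le a c /\ le b c.

Definition is_lub (S : D -> Prop) (x : D) : Prop :=
  (forall s, S s -> le s x) /\ (forall y, (forall s, S s -> le s y) -> le x y).

Definition is_dcpo : Prop :=
  (forall x, le x x) /\
  (forall x y z, le x y -> le y z -> le x z) /\
  (forall x y, le x y -> le y x -> x = y) /\
  (forall S, directed S -> exists x, is_lub S x).

Definition way_below (x y : D) : Prop :=
  forall S s, directed S -> is_lub S s -> le y s -> exists d, S d /\ le x d.

Definition continuous_dcpo : Prop :=
  is_dcpo /\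
  forall x, directed (fun y => way_below y x) /\ is_lub (fun y => way_below y x) x.

Definition scott_open (U : D -> Prop) : Prop :=
  (forall x y, U x -> le x y -> U y) /\
  (forall S s, directed S -> is_lub S s -> U s -> exists d, S d /\ U d).

Lemma scott_open_full : scott_open (fun _ => True).
Proof.
  split; [tauto|]. intros S s [[d Sd] _] _ _. exists d; tauto.
Qed.

Lemma scott_open_inter U V : scott_open U -> scott_open V ->
  scott_open (fun x => U x /\ V x).
Proof.
  intros [U1 U2] [V1 V2]. split.
  - intros x y [Ux Vx] Hxy. split; [eapply U1|eapply V1]; eassumption.
  - intros S s HS Hs [Us Vs].
    destruct (U2 S s HS Hs Us) as [a [Sa Ua]].
    destruct (V2 S s HS Hs Vs) as [b [Sb Vb]].
    destruct HS as [_ HS]. destruct (HS a b Sa Sb) as [c [Sc [Hac Hbc]]].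
    exists c. split; [assumption|]. split; [eapply U1|eapply V1]; eassumption.
Qed.

Lemma scott_open_union (F : (D -> Prop) -> Prop) :
  (forall U, F U -> scott_open U) -> scott_open (fun x => exists U, F U /\ U x).
Proof.
  intros HF. split.
  - intros x y [U [FU Ux]] Hxy. exists U. split; [assumption|].
    destruct (HF U FU) as [H1 _]. eapply H1; eassumption.
  - intros S s HS Hs [U [FU Us]]. destruct (HF U FU) as [_ H2].
    destruct (H2 S s HS Hs Us) as [d [Sd Ud]]. exists d. split; [assumption|].
    exists U; tauto.
Qed.

Definition scott_space : Top :=
  @MkTop D scott_open scott_open_full scott_open_inter scott_open_union.
End Order.

Section SoberLC.
Variable X : Top.

Definition closed (C : X -> Prop) : Prop := open X (fun x => ~ C x).

Definition point_closure (x : X) : X -> Prop :=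
  fun y => forall U, open X U -> U y -> U x.

Definition irreducible_closed (C : X -> Prop) : Prop :=
  closed C /\ (exists x, C x) /\
  forall C1 C2, closed C1 -> closed C2 -> (forall x, C x -> C1 x \/ C2 x) ->
    (forall x, C x -> C1 x) \/ (forall x, C x -> C2 x).

Definition sober : Prop :=
  forall C, irreducible_closed C ->
    exists x, (forall y, C y <-> point_closure x y) /\
      forall x', (forall y, C y <-> point_closure x' y) -> x' = x.

Definition compact (K : X -> Prop) : Prop :=
  forall F : (X -> Prop) -> Prop, (forall U, F U -> open X U) ->
    (forall x, K x -> exists U, F U /\ U x) ->
    exists l : list (X -> Prop), (forall U, In U l -> F U) /\
      forall x, K x -> exists U, In U l /\ U x.

Definition saturated (K : X -> Prop) : Prop :=
  forall x, (forall U, open X U -> (forall y, K y -> U y) -> U x) -> K x.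

Definition locally_compact : Prop :=
  forall x U, open X U -> U x ->
    exists K V, compact K /\ saturated K /\ open X V /\ V x /\
      (forall y, V y -> K y) /\ (forall y, K y -> U y).
End SoberLC.

Definition domain_complete (X : Top) : Prop :=
  exists (D : Type) (le : D -> D -> Prop),
    continuous_dcpo le /\
    exists G : scott_space le -> Prop,
      G_delta G /\ homeomorphic X (@subspace _ G).

Definition LCS_complete (X : Top) : Prop :=
  exists Y : Top, sober Y /\ locally_compact Y /\
    exists G : Y -> Prop, G_delta G /\ homeomorphic X (@subspace _ G).

(** * Coequalizers in the full subcategory of Top on objects satisfying P *)
Definition is_coequalizer (P : Top -> Prop) {X Y : Top} (f g : X -> Y)
    (Q : Top) (q : Y -> Q) : Prop :=
  P Q /\ continuous q /\ (forall x, q (f x) = q (g x)) /\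
  forall (Z : Top) (h : Y -> Z), P Z -> continuous h ->
    (forall x, h (f x) = h (g x)) ->
    exists u : Q -> Z, continuous u /\ (forall y, u (q y) = h y) /\
      forall u' : Q -> Z, continuous u' -> (forall y, u' (q y) = h y) ->
        forall z, u' z = u z.

Definition lacks_some_coequalizer (P : Top -> Prop) : Prop :=
  exists (X Y : Top) (f g : X -> Y),
    P X /\ P Y /\ continuous f /\ continuous g /\
    ~ (exists (Q : Top) (q : Y -> Q), @is_coequalizer P X Y f g Q q).

From Stdlib Require Import List Classical ClassicalEpsilon FunctionalExtensionality PropExtensionality ProofIrrelevance Lia Arith.
From mathcomp.classical Require classical_sets.

(** Every domain-complete and every LCS-complete space is
       Baire: countably many open sets, each meeting every nonempty open set,
       have a common point.  In a continuous dcpo such a point is the sup of a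
       way-below chain built by dependent choice; in a locally compact sober
       space it lies in the intersection of a nested sequence of compact
       saturated sets, which is nonempty by well-filteredness (Zorn).
    2. Examples.  Sierpinski space, discrete spaces, and the space [Ytop] made
       of one convergent sequence for every node of the tree [list nat] belong
       to both classes; [Ytop] is a G_delta in a continuous dcpo and is
       Hausdorff and locally compact.
    3. The counterexample.  The maps [f0], [g0] glue the n-th point of the
       sequence at node s to the limit of the sequence at the child [n :: s].
       In any full subcategory containing Sierpinski space, a coequalizer
       [q : Ytop -> Q] would have its open sets determined by their
       preimages; then the sets "depth > k" are dense open in Q, yet no point
       of Q lies in all of them, so Q would not be Baire. *)

Lemma open_ext (X : Top) (A B : X -> Prop) :
  (forall x, A x <-> B x) -> open X A -> open X B.
Proof.
  intros H HA. replace B with A; [exact HA|].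
  apply functional_extensionality; intros x; apply propositional_extensionality, H.
Qed.

Lemma open_empty (X : Top) : open X (fun _ => False).
Proof.
  eapply open_ext; [|apply (@open_union X (fun _ => False)); tauto].
  intros x; simpl; firstorder.
Qed.

Lemma open_or (X : Top) (A B : X -> Prop) :
  open X A -> open X B -> open X (fun x => A x \/ B x).
Proof.
  intros HA HB.
  eapply open_ext; [|apply (@open_union X (fun U => U = A \/ U = B))].
  - intros x; split.
    + intros [U [[-> | ->] Ux]]; tauto.
    + intros [Ax|Bx]; [exists A|exists B]; tauto.
  - intros U [-> | ->]; assumption.
Qed.

Lemma closed_compl (X : Top) (A : X -> Prop) : open X A -> closed X (fun x => ~ A x).
Proof. intros HA. eapply open_ext; [|exact HA]. intros x; split; [tauto|apply NNPP]. Qed.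

Lemma continuous_comp {A B C : Top} (f : A -> B) (g : B -> C) :
  continuous f -> continuous g -> continuous (fun x => g (f x)).
Proof. intros Hf Hg V HV. exact (Hf _ (Hg V HV)). Qed.

Lemma open_saturated (Y : Top) (K : Y -> Prop) : open Y K -> saturated Y K.
Proof. intros HK x Hx. apply (Hx K HK); auto. Qed.

Lemma compact_singleton (Y : Top) (x : Y) : compact Y (fun y => y = x).
Proof.
  intros F HF Hcov. destruct (Hcov x eq_refl) as [U [FU Ux]].
  exists (U :: nil). split; [intros V [<-|[]]; exact FU|].
  intros y ->. exists U; split; [left; reflexivity|exact Ux].
Qed.

Definition hausdorff (Y : Top) : Prop :=
  forall x y : Y, x <> y ->
    exists A B, open Y A /\ open Y B /\ A x /\ B y /\ forall z, ~ (A z /\ B z).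

(** In a Hausdorff space the only irreducible closed sets are point closures
    of single points, which are singletons. *)
Lemma hausdorff_sober {Y : Top} : hausdorff Y -> sober Y.
Proof.
  intros Hs.
  assert (Hpc : forall x y, point_closure Y x y -> y = x).
  { intros x y H. apply NNPP; intros Hne.
    destruct (Hs x y (fun e => Hne (eq_sym e))) as [A [B [HA [HB [Ax [By Hd]]]]]].
    apply (Hd x). split; [exact Ax|]. exact (H B HB By). }
  intros C [HC [[x Cx] Hirr]].
  assert (Hsing : forall y, C y -> y = x).
  { intros y Cy. apply NNPP; intros Hne.
    destruct (Hs x y (fun e => Hne (eq_sym e))) as [A [B [HA [HB [Ax [By Hd]]]]]].
    destruct (Hirr _ _ (closed_compl _ _ HA) (closed_compl _ _ HB)) as [Hc|Hc].
    - intros z _. apply not_and_or, Hd.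
    - exact (Hc x Cx Ax).
    - exact (Hc y Cy By). }
  exists x. split.
  - intros y. split.
    + intros Cy. rewrite (Hsing y Cy). intros U _ Ux; exact Ux.
    + intros Hy. rewrite (Hpc x y Hy). exact Cx.
  - intros x' Hx'. apply Hsing, Hx'. intros U _ Ux; exact Ux.
Qed.

(** A space is a G_delta of itself, so continuous dcpos (with the Scott
    topology) and locally compact sober spaces lie in the respective classes. *)
Lemma homeomorphic_full_subspace (Y : Top) : homeomorphic Y (@subspace Y (fun _ => True)).
Proof.
  exists (fun y => exist _ y I), (fun z => proj1_sig z). repeat split.
  - intros V [U [HU HV]]. eapply open_ext; [|exact HU].
    intros x; simpl. rewrite (HV (exist _ x I)). tauto.
  - intros V HV. exists V. split; [exact HV|tauto].
  - intros [y []]. reflexivity.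
Qed.

Lemma G_delta_full (Y : Top) : @G_delta Y (fun _ => True).
Proof. exists (fun _ _ => True). split; [intros; apply open_full|tauto]. Qed.

Lemma domain_complete_scott {D : Type} {le : D -> D -> Prop} :
  continuous_dcpo le -> domain_complete (scott_space le).
Proof.
  intros H. exists D, le. split; [exact H|].
  exists (fun _ => True). split; [apply G_delta_full|apply homeomorphic_full_subspace].
Qed.

Lemma LCS_complete_self {Y : Top} : sober Y -> locally_compact Y -> LCS_complete Y.
Proof.
  intros Hs Hl. exists Y. split; [exact Hs|split; [exact Hl|]].
  exists (fun _ => True). split; [apply G_delta_full|apply homeomorphic_full_subspace].
Qed.

Section Preorder.
Variables (D : Type) (le : D -> D -> Prop).
Hypothesis le_refl : forall x, le x x.

Lemma directed_singleton (x : D) : directed le (fun y => y = x).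
Proof.
  split; [exists x; reflexivity|].
  intros a b -> ->. exists x. split; [reflexivity|split; apply le_refl].
Qed.

Lemma way_below_le (x y : D) : way_below le x y -> le x y.
Proof.
  intros H. destruct (H (fun z => z = y) y (directed_singleton y)) as [d [-> Hd]];
    [|apply le_refl|exact Hd].
  split; [intros s ->; apply le_refl|intros z Hz; apply Hz; reflexivity].
Qed.

Lemma compact_element_approx (x : D) :
  way_below le x x ->
  directed le (fun y => way_below le y x) /\ is_lub le (fun y => way_below le y x) x.
Proof.
  intros Hx. split.
  - split; [exists x; exact Hx|]. intros a b Ha Hb.
    exists x. split; [exact Hx|split; apply way_below_le; assumption].
  - split; [intros s Hs; apply way_below_le, Hs|]. intros y Hy. exact (Hy x Hx).
Qed.

Lemma continuous_of_compact_elements :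
  is_dcpo le -> (forall x, way_below le x x) -> continuous_dcpo le.
Proof. intros Hd Hw. split; [exact Hd|]. intros x. exact (compact_element_approx x (Hw x)). Qed.
End Preorder.

Lemma lub_unique {D : Type} {le : D -> D -> Prop} {S : D -> Prop} {a b : D} :
  (forall x y, le x y -> le y x -> x = y) -> is_lub le S a -> is_lub le S b -> a = b.
Proof. intros Hanti [Ha Ha'] [Hb Hb']. apply Hanti; [apply Ha', Hb|apply Hb', Ha]. Qed.

Lemma greatest_lub {D : Type} {le : D -> D -> Prop} {S : D -> Prop} {a : D} :
  S a -> (forall b, S b -> le b a) -> is_lub le S a.
Proof. intros Sa Ha. split; [exact Ha|intros y Hy; exact (Hy a Sa)]. Qed.

Lemma directed_maximal_lub {D : Type} {le : D -> D -> Prop} {S : D -> Prop} {a : D} :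
  directed le S -> S a -> (forall c, le a c -> c = a) -> is_lub le S a.
Proof.
  intros [_ Hdir] Sa Hmax. apply greatest_lub; [exact Sa|].
  intros b Sb. destruct (Hdir b a Sb Sa) as [c [_ [Hbc Hac]]].
  rewrite (Hmax c Hac) in Hbc. exact Hbc.
Qed.

Lemma dependent_choice_seq (A : Type) (P : A -> Prop) (R : nat -> A -> A -> Prop) :
  (forall k a, P a -> exists b, P b /\ R k a b) ->
  forall a0, P a0 -> exists f : nat -> A, forall k, P (f k) /\ R k (f k) (f (S k)).
Proof.
  intros H a0 P0.
  assert (step : forall k (a : {a | P a}), {b : {b | P b} | R k (proj1_sig a) (proj1_sig b)}).
  { intros k [a Pa]. destruct (constructive_indefinite_description _ (H k a Pa)) as [b [Pb Rb]].
    exists (exist _ b Pb). exact Rb. }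
  set (g := fix g (k : nat) : {a | P a} :=
              match k with 0 => exist _ a0 P0 | S k' => proj1_sig (step k' (g k')) end).
  exists (fun k => proj1_sig (g k)). intros k.
  split; [exact (proj2_sig (g k))|exact (proj2_sig (step k (g k)))].
Qed.

Lemma zorn_union (T : Type) (P : (T -> Prop) -> Prop) :
  (forall F : (T -> Prop) -> Prop, (forall A, F A -> P A) ->
     (forall A B, F A -> F B -> (forall x, A x -> B x) \/ (forall x, B x -> A x)) ->
     P (fun x => exists A, F A /\ A x)) ->
  exists A, P A /\ forall B, P B -> (forall x, A x -> B x) -> forall x, B x -> A x.
Proof.
  intros H.
  destruct (@classical_sets.Zorn_bigcup T P) as [A [PA HA]].
  - intros F FP Ftot.
    replace (classical_sets.bigcup F (fun X => X)) with (fun x => exists A, F A /\ A x).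
    + apply H; [exact FP|exact Ftot].
    + apply functional_extensionality; intros x; apply propositional_extensionality.
      split; [intros [X [? ?]]; econstructor; eauto|intros [X ? ?]; eauto].
  - exists A; split; [exact PA|]. intros B PB AB x Bx.
    apply NNPP; intros nA. apply (HA B); [split; [exact AB|]|exact PB].
    intros BA. exact (nA (BA x Bx)).
Qed.

(** * The Baire property *)

(** [Q] is Baire (in the weak sense needed here): if [Q] is nonempty, countably
    many open sets each meeting every nonempty open set have a common point. *)
Definition baire (Q : Top) : Prop :=
  forall V : nat -> Q -> Prop, (forall k, open Q (V k)) ->
  (forall k O, open Q O -> (exists z, O z) -> exists z, O z /\ V k z) ->
  (exists z : Q, True) -> exists z, forall k, V k z.

(** The same property for a subspace [G] of [Y], phrased with open sets of [Y]. *)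
Definition baire_in {Y : Top} (G : Y -> Prop) : Prop :=
  forall W : nat -> Y -> Prop, (forall k, open Y (W k)) ->
  (forall k O, open Y O -> (exists g, G g /\ O g) -> exists g, G g /\ O g /\ W k g) ->
  (exists g, G g) -> exists x, G x /\ forall k, W k x.

Lemma baire_transfer {Q Y : Top} {G : Y -> Prop} :
  homeomorphic Q (@subspace _ G) -> baire_in G -> baire Q.
Proof.
  intros [h [k [Hh [Hk [Hkh Hhk]]]]] Hbaire V HV Hd [z0 _].
  destruct (choice (fun n (U : Y -> Prop) =>
              open Y U /\ forall g : @subspace _ G, V n (k g) <-> U (proj1_sig g)))
    as [W HW]; [intros n; exact (Hk (V n) (HV n))|].
  destruct (Hbaire W (fun n => proj1 (HW n))) as [x [Gx Wx]].
  - intros n O HO [g [Gg Og]].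
    assert (HO' : open Q (fun x => O (proj1_sig (h x)))).
    { apply (Hh (fun z => O (proj1_sig z))). exists O; split; [exact HO|tauto]. }
    destruct (Hd n _ HO') as [x [Ox Vx]].
    + exists (k (exist _ g Gg)). rewrite Hhk. exact Og.
    + exists (proj1_sig (h x)). split; [exact (proj2_sig (h x))|split; [exact Ox|]].
      apply (proj2 (HW n)). rewrite Hkh. exact Vx.
  - exists (proj1_sig (h z0)). exact (proj2_sig (h z0)).
  - exists (k (exist _ x Gx)). intros n. apply (proj2 (HW n)). exact (Wx n).
Qed.

Section ContinuousDcpo.
Variables (D : Type) (le : D -> D -> Prop).
Hypothesis Hc : continuous_dcpo le.
Notation wb := (way_below le).

Let le_refl x : le x x. Proof. destruct Hc as [[H _] _]; apply H. Qed.
Let le_trans x y z : le x y -> le y z -> le x z.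
Proof. destruct Hc as [[_ [H _]] _]; apply H. Qed.

Let wb_le x y : wb x y -> le x y := @way_below_le D le le_refl x y.

Let approx x : directed le (fun y => wb y x) /\ is_lub le (fun y => wb y x) x.
Proof. destruct Hc as [_ H]; apply H. Qed.

Lemma le_way_below_trans x y z : le x y -> wb y z -> wb x z.
Proof.
  intros Hxy Hyz S s HS Hs Hzs. destruct (Hyz S s HS Hs Hzs) as [d [Sd Hd]].
  exists d; split; [exact Sd|eapply le_trans; eassumption].
Qed.

Lemma way_below_le_trans x y z : wb x y -> le y z -> wb x z.
Proof. intros Hxy Hyz S s HS Hs Hzs. apply (Hxy S s HS Hs). eapply le_trans; eassumption. Qed.

Lemma interpolation a y : wb a y -> exists b, wb a b /\ wb b y.
Proof.
  intros Hay.
  set (S := fun b => exists c, wb b c /\ wb c y).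
  assert (HS : directed le S).
  { split.
    - destruct (approx y) as [[[c Hcy] _] _]. destruct (approx c) as [[[b Hb] _] _].
      exists b, c; tauto.
    - intros b1 b2 [c1 [H1 H1']] [c2 [H2 H2']].
      destruct (approx y) as [[_ Hd] _]. destruct (Hd c1 c2 H1' H2') as [c [Hcy [Hl1 Hl2]]].
      destruct (H1 _ c (proj1 (approx c)) (proj2 (approx c)) Hl1) as [d1 [Hd1 Hbd1]].
      destruct (H2 _ c (proj1 (approx c)) (proj2 (approx c)) Hl2) as [d2 [Hd2 Hbd2]].
      destruct (proj2 (proj1 (approx c)) d1 d2 Hd1 Hd2) as [e [He [He1 He2]]].
      exists e. split; [exists c; tauto|]. split; eapply le_trans; eassumption. }
  assert (Hl : is_lub le S y).
  { split.
    - intros b [c [Hb Hcy]]. eapply le_trans; apply wb_le; eassumption.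
    - intros z Hz. apply (proj2 (proj2 (approx y))). intros c Hcy.
      apply (proj2 (proj2 (approx c))). intros b Hb. apply Hz. exists c; tauto. }
  destruct (Hay S y HS Hl (le_refl y)) as [b [[c [Hbc Hcy]] Hab]].
  exists c. split; [eapply le_way_below_trans; eassumption|exact Hcy].
Qed.

(** By interpolation, the set of elements way above [a] is Scott open. *)
Lemma way_below_open a : scott_open le (fun y => wb a y).
Proof.
  split.
  - intros x y H H'. eapply way_below_le_trans; eassumption.
  - intros S s HS Hs Has. destruct (interpolation a s Has) as [b [Hab Hbs]].
    destruct (Hbs S s HS Hs (le_refl s)) as [d [Sd Hbd]].
    exists d. split; [exact Sd|eapply way_below_le_trans; eassumption].
Qed.

Lemma approximant_in_open U x : scott_open le U -> U x -> exists b, wb b x /\ U b.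
Proof.
  intros [_ HU] Ux. destruct (HU _ x (proj1 (approx x)) (proj2 (approx x)) Ux) as [d Hd].
  exists d; exact Hd.
Qed.

(** Every G_delta subset of a continuous dcpo is Baire: a way-below chain
    entering the n-th open set of the G_delta and the n-th dense open set at
    step n has its supremum in all of them. *)
Lemma dcpo_G_delta_baire {G : scott_space le -> Prop} : G_delta G -> baire_in G.
Proof.
  intros [Uo [HUo HG]] W HW Hd [g0 Gg0].
  set (P := fun a => exists g, G g /\ wb a g).
  set (R := fun k a b => wb a b /\ W k b /\ Uo k b).
  assert (Hstep : forall k a, P a -> exists b, P b /\ R k a b).
  { intros k a [g [Gg Hag]].
    destruct (Hd k (fun y => wb a y) (way_below_open a)) as [g' [Gg' [Hag' Wg']]];
      [exists g; tauto|].
    assert (Ho : scott_open le (fun y => wb a y /\ W k y /\ Uo k y)).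
    { apply scott_open_inter; [apply way_below_open|apply scott_open_inter; [apply HW|apply HUo]]. }
    destruct (approximant_in_open _ g' Ho) as [b [Hbg [Hab [Wb Ub]]]];
      [split; [exact Hag'|split; [exact Wg'|exact (proj1 (HG g') Gg' k)]]|].
    exists b. split; [exists g'; tauto|unfold R; tauto]. }
  destruct (proj1 (proj1 (approx g0))) as [a0 Ha0].
  destruct (dependent_choice_seq _ P R Hstep a0) as [f Hf]; [exists g0; tauto|].
  assert (Hchain : forall i j, i <= j -> le (f i) (f j)).
  { intros i j Hij. induction Hij; [apply le_refl|].
    eapply le_trans; [exact IHHij|apply wb_le, (proj1 (proj2 (Hf m)))]. }
  assert (HS : directed le (fun x => exists i, x = f i)).
  { split; [exists (f 0), 0; reflexivity|].
    intros a b [i ->] [j ->]. exists (f (max i j)). split; [exists (max i j); reflexivity|].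
    split; apply Hchain; lia. }
  destruct Hc as [[_ [_ [_ Hlub]]] _].
  destruct (Hlub _ HS) as [s [Hs _]].
  assert (Hup : forall k, le (f (S k)) s) by (intros k; apply Hs; exists (S k); reflexivity).
  exists s. split.
  - apply HG. intros n. apply (proj1 (HUo n) (f (S n))); [apply (Hf n)|apply Hup].
  - intros k. apply (proj1 (HW k) (f (S k))); [apply (Hf k)|apply Hup].
Qed.
End ContinuousDcpo.

Lemma domain_complete_baire (Q : Top) : domain_complete Q -> baire Q.
Proof.
  intros [D [le [Hc [G [HG Hhom]]]]].
  exact (baire_transfer Hhom (dcpo_G_delta_baire _ _ Hc HG)).
Qed.

Lemma chain_finite_max {Y : Type} (F : (Y -> Prop) -> Prop) :
  (forall A B, F A -> F B -> (forall x, A x -> B x) \/ (forall x, B x -> A x)) ->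
  forall l, (forall U, In U l -> F U) ->
  l = nil \/ exists M, F M /\ forall U, In U l -> forall x, U x -> M x.
Proof.
  intros Htot l. induction l as [|U l IH]; intros Hl; [left; reflexivity|right].
  assert (FU : F U) by (apply Hl; left; reflexivity).
  destruct IH as [->|[M [FM HM]]].
  - intros V HV; apply Hl; right; exact HV.
  - exists U. split; [exact FU|]. intros V [->|[]]; auto.
  - destruct (Htot U M FU FM) as [HUM|HMU].
    + exists M; split; [exact FM|]. intros V [->|HV]; [exact HUM|exact (HM V HV)].
    + exists U; split; [exact FU|].
      intros V [->|HV] x Vx; [exact Vx|apply HMU; exact (HM V HV x Vx)].
Qed.

Lemma maximal_avoiding_open_irreducible {Y : Top} (K : nat -> Y -> Prop) (A : Y -> Prop) :
  (forall i j, i <= j -> forall x, K j x -> K i x) ->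
  open Y A -> (forall j, ~ (forall x, K j x -> A x)) ->
  (forall B, open Y B -> (forall j, ~ (forall x, K j x -> B x)) ->
     (forall x, A x -> B x) -> forall x, B x -> A x) ->
  irreducible_closed Y (fun x => ~ A x).
Proof.
  intros Hdec HA HAK Hmax.
  assert (Hmiss : forall C, closed Y C -> ~ (forall x, ~ A x -> C x) ->
             exists j, forall x, K j x -> A x \/ ~ C x).
  { intros C HC Hn. apply NNPP; intros Hno.
    assert (HAC : forall x, A x \/ ~ C x -> A x).
    { apply Hmax; [apply open_or; assumption| |intros y Ay; left; exact Ay].
      intros j Hj. apply Hno; exists j; exact Hj. }
    apply Hn. intros x nAx. apply NNPP; intros nCx. exact (nAx (HAC x (or_intror nCx))). }
  split; [exact (closed_compl _ _ HA)|split].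
  - apply NNPP; intros Hn. apply (HAK 0). intros x _.
    apply NNPP; intros nA. apply Hn; exists x; exact nA.
  - intros C1 C2 H1 H2 Hcov.
    apply NNPP; intros Hn. apply not_or_and in Hn. destruct Hn as [Hn1 Hn2].
    destruct (Hmiss C1 H1 Hn1) as [j1 Hj1]. destruct (Hmiss C2 H2 Hn2) as [j2 Hj2].
    apply (HAK (max j1 j2)). intros x Kx. apply NNPP; intros nA.
    destruct (Hj1 x (Hdec j1 _ (Nat.le_max_l _ _) x Kx)) as [?|n1]; [tauto|].
    destruct (Hj2 x (Hdec j2 _ (Nat.le_max_r _ _) x Kx)) as [?|n2]; [tauto|].
    destruct (Hcov x nA); tauto.
Qed.

(** Well-filteredness of sober spaces, for decreasing sequences: a decreasing
    sequence of nonempty compact saturated sets has a common point, namely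
    the generic point of the complement of a maximal open set containing no
    [K j] (which exists by Zorn, since the [K j] are compact). *)
Lemma sober_nested_compact {Y : Top} (K : nat -> Y -> Prop) :
  sober Y -> (forall j, compact _ (K j)) -> (forall j, saturated _ (K j)) ->
  (forall j, exists x, K j x) -> (forall j x, K (S j) x -> K j x) ->
  exists x, forall j, K j x.
Proof.
  intros Hsob Hcomp Hsat Hne Hdec.
  assert (Hdec' : forall i j, i <= j -> forall x, K j x -> K i x).
  { intros i j Hij. induction Hij; auto. }
  set (P := fun A : Y -> Prop => open Y A /\ forall j, ~ (forall x, K j x -> A x)).
  destruct (@zorn_union Y P) as [A [[HA HAK] Hmax]].
  - intros F FP Ftot. split.
    + apply open_union. intros U FU; apply (FP U FU).
    + intros j Hj.
      destruct (Hcomp j F (fun U FU => proj1 (FP U FU)) Hj) as [l [Hl Hcov]].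
      destruct (chain_finite_max F Ftot l Hl) as [->|[M [FM HM]]].
      * destruct (Hne j) as [x Kx]. destruct (Hcov x Kx) as [U [[] _]].
      * apply (proj2 (FP M FM) j). intros x Kx. destruct (Hcov x Kx) as [U [HU Ux]].
        exact (HM U HU x Ux).
  - assert (Hirr : irreducible_closed Y (fun x => ~ A x)).
    { apply (maximal_avoiding_open_irreducible K A Hdec' HA HAK).
      intros B HB HBK. exact (Hmax B (conj HB HBK)). }
    destruct (Hsob _ Hirr) as [x [Hx _]].
    exists x. intros j. apply (Hsat j). intros U HU HKU.
    apply NNPP; intros nU. apply (HAK j). intros y Ky.
    apply NNPP; intros nAy. apply nU.
    exact (proj1 (Hx y) nAy U HU (HKU y Ky)).
Qed.

(** Every G_delta subset of a locally compact sober space is Baire: choose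
    nested compact neighbourhoods shrinking into the n-th open set of the
    G_delta and the n-th dense open set, then apply well-filteredness. *)
Lemma lcs_G_delta_baire {Y : Top} {G : Y -> Prop} :
  sober Y -> locally_compact Y -> G_delta G -> baire_in G.
Proof.
  intros Hsob Hlc [Uo [HUo HG]] W HW Hd [g0 Gg0].
  (* a compact saturated [K] with an open [O] inside it meeting [G] *)
  set (P := fun p : (Y -> Prop) * (Y -> Prop) =>
              compact _ (fst p) /\ saturated _ (fst p) /\ open Y (snd p) /\
              (forall x, snd p x -> fst p x) /\ exists g, G g /\ snd p g).
  set (R := fun k (p p' : (Y -> Prop) * (Y -> Prop)) =>
              (forall x, fst p' x -> snd p x) /\ (forall x, fst p' x -> W k x /\ Uo k x)).
  assert (Hstep : forall k p, P p -> exists p', P p' /\ R k p p').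
  { intros k [K O] [HK [HKs [HO [HOK [g [Gg Og]]]]]]. simpl in *.
    destruct (Hd k O HO) as [g' [Gg' [Og' Wg']]]; [exists g; tauto|].
    assert (HU : open Y (fun x => O x /\ W k x /\ Uo k x)).
    { apply open_inter; [exact HO|apply open_inter; auto]. }
    destruct (Hlc g' _ HU) as [K' [O' [HK' [HKs' [HO' [Og'' [HOK' HK'U]]]]]]].
    { split; [exact Og'|split; [exact Wg'|exact (proj1 (HG g') Gg' k)]]. }
    exists (K', O'). split.
    - unfold P; simpl. repeat split; auto. exists g'; tauto.
    - unfold R; simpl. split; intros x Kx; apply HK'U in Kx; tauto. }
  destruct (Hlc g0 (fun _ => True) (open_full Y) I)
    as [K0 [O0 [HK0 [HKs0 [HO0 [Og0 [HOK0 _]]]]]]].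
  destruct (dependent_choice_seq _ P R Hstep (K0, O0)) as [f Hf].
  { unfold P; simpl. repeat split; auto. exists g0; tauto. }
  destruct (sober_nested_compact (fun j => fst (f j)) Hsob) as [x Hx].
  - intros j; apply (Hf j).
  - intros j; apply (Hf j).
  - intros j. destruct (Hf j) as [[_ [_ [_ [HOK [g [_ Og]]]]]] _]. exists g. exact (HOK g Og).
  - intros j y Hy. destruct (Hf j) as [[_ [_ [_ [HOK _]]]] [HR _]]. exact (HOK y (HR y Hy)).
  - exists x. split.
    + apply HG. intros n. exact (proj2 (proj2 (proj2 (Hf n)) x (Hx (S n)))).
    + intros k. exact (proj1 (proj2 (proj2 (Hf k)) x (Hx (S k)))).
Qed.

Lemma LCS_complete_baire (Q : Top) : LCS_complete Q -> baire Q.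
Proof.
  intros [Y [Hsob [Hlc [G [HG Hhom]]]]].
  exact (baire_transfer Hhom (lcs_G_delta_baire Hsob Hlc HG)).
Qed.

(** * Sierpinski space *)

(** The two-point dcpo [false <= true]; its Scott topology has opens
    [{}], [{true}] and [{false, true}]. *)
Definition sier_le (b c : bool) : Prop := b = false \/ c = true.
Definition Sier : Top := scott_space sier_le.

(** Any set containing [true] has sup [true], any other set has sup [false]. *)
Lemma sier_dcpo : is_dcpo sier_le.
Proof.
  unfold sier_le.
  split; [intros [|]; auto|split; [intros [|] [|] [|]; intuition congruence|split]].
  - intros [|] [|]; intuition congruence.
  - intros S HS. destruct (classic (S true)) as [Ht|Hf].
    + exists true. split; [auto|]. intros y Hy. destruct (Hy true Ht); [discriminate|auto].
    + exists false. split; [|auto]. intros [|] Hs; [contradiction|auto].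
Qed.

(** Both points are compact: [true] is not the sup of a set avoiding it. *)
Lemma sier_continuous : continuous_dcpo sier_le.
Proof.
  apply continuous_of_compact_elements; [intros [|]; unfold sier_le; auto|apply sier_dcpo|].
  intros [|] S s [[d Sd] _] [Hub Hl] Hs.
  - destruct (classic (S true)) as [Ht|Hf]; [exists true; unfold sier_le; auto|].
    exfalso. assert (H : sier_le s false).
    { apply Hl. intros [|] Hz; [contradiction|left; auto]. }
    unfold sier_le in *. destruct Hs, H; congruence.
  - exists d. split; [exact Sd|left; auto].
Qed.

Lemma sier_open_up (U : bool -> Prop) : scott_open sier_le U -> U false -> U true.
Proof. intros [H _] Hf. apply (H false); [exact Hf|right; auto]. Qed.

Lemma sier_open_true : scott_open sier_le (fun b => b = true).
Proof.
  split.
  - intros x y -> [H|H]; [discriminate|exact H].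
  - intros S s HS [Hub Hl] ->. apply NNPP; intros Hn.
    assert (H : sier_le true false).
    { apply Hl. intros [|] Hz; [exfalso; apply Hn; exists true; auto|left; auto]. }
    destruct H; discriminate.
Qed.

(** The irreducible closed sets are [{false}] and [{false, true}], the closures of
    [false] and of [true]. *)
Lemma sier_sober : sober Sier.
Proof.
  intros C [HC [[x0 Cx0] Hirr]].
  assert (Cf : C false).
  { destruct x0; [|exact Cx0]. apply NNPP; intros nCf. exact (sier_open_up _ HC nCf Cx0). }
  assert (pc_true : forall y, point_closure Sier true y).
  { intros y U HU Uy. destruct y; [exact Uy|apply sier_open_up; assumption]. }
  assert (pc_false : forall y, point_closure Sier false y <-> y = false).
  { intros [|]; split.
    - intros H. symmetry. exact (H (fun b => b = true) sier_open_true eq_refl).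
    - intros H; discriminate.
    - intros _; reflexivity.
    - intros _ U _ Uy; exact Uy. }
  destruct (classic (C true)) as [Ct|nCt].
  - exists true. split.
    + intros y; split; [intros _; apply pc_true|intros _; destruct y; auto].
    + intros [|] Hx'; [reflexivity|]. exfalso.
      discriminate (proj1 (pc_false true) (proj1 (Hx' true) Ct)).
  - exists false. split.
    + intros y; rewrite pc_false; split; [intros Cy; destruct y; tauto|intros ->; exact Cf].
    + intros [|] Hx'; [|reflexivity]. exfalso. apply nCt, Hx', pc_true.
Qed.

(** Every point has a smallest open neighbourhood (its upper set), which is
    compact; hence Sierpinski space is locally compact. *)
Lemma sier_locally_compact : locally_compact Sier.
Proof.
  intros x U HU Ux.
  set (K := fun y => sier_le x y).
  assert (HK : open Sier K).
  { destruct x.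
    - eapply open_ext; [|exact sier_open_true]. intros y; unfold K, sier_le; intuition congruence.
    - eapply open_ext; [|apply open_full]. intros y; unfold K, sier_le; tauto. }
  assert (Kx : K x) by (unfold K, sier_le; destruct x; auto).
  exists K, K.
  split; [|split; [exact (open_saturated _ _ HK)|split; [exact HK|split; [exact Kx|split; [auto|]]]]].
  - intros F HF Hcov. destruct (Hcov x Kx) as [V [FV Vx]].
    exists (V :: nil). split; [intros W [<-|[]]; exact FV|].
    intros y Ky. exists V. split; [left; reflexivity|]. exact (proj1 (HF V FV) x y Vx Ky).
  - intros y Ky. exact (proj1 HU x y Ux Ky).
Qed.

Lemma sier_domain_complete : domain_complete Sier.
Proof. exact (domain_complete_scott sier_continuous). Qed.

Lemma sier_LCS_complete : LCS_complete Sier.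
Proof. exact (LCS_complete_self sier_sober sier_locally_compact). Qed.

(** Open sets of a space [Z] are exactly the preimages of [true] under
    continuous maps to Sierpinski space; [indicator O] is the map for [O]. *)
Definition indicator {Z : Top} (O : Z -> Prop) (z : Z) : Sier :=
  if excluded_middle_informative (O z) then true else false.

Lemma indicator_true {Z : Top} (O : Z -> Prop) z : indicator O z = true <-> O z.
Proof.
  unfold indicator. destruct (excluded_middle_informative (O z)); split; intros; try tauto; discriminate.
Qed.

Lemma indicator_iff {Z Z' : Top} (O : Z -> Prop) (O' : Z' -> Prop) a b :
  (O a <-> O' b) -> indicator O a = indicator O' b.
Proof.
  intros H. unfold indicator.
  destruct (excluded_middle_informative (O a)), (excluded_middle_informative (O' b)); tauto.
Qed.

Lemma indicator_continuous {Z : Top} (O : Z -> Prop) : open Z O -> continuous (indicator O).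
Proof.
  intros HO V HV.
  destruct (classic (V false)) as [Vf|nVf].
  - eapply open_ext; [|apply open_full]. intros z; split; [intros _|auto].
    destruct (indicator O z); [exact (sier_open_up V HV Vf)|exact Vf].
  - destruct (classic (V true)) as [Vt|nVt].
    + eapply open_ext; [|exact HO]. intros z. rewrite <- indicator_true.
      destruct (indicator O z); split; intros; try tauto; discriminate.
    + eapply open_ext; [|apply open_empty]. intros z; split; [tauto|].
      destruct (indicator O z); tauto.
Qed.

Lemma continuous_to_sier {Z : Top} (u : Z -> Sier) :
  continuous u -> open Z (fun z => u z = true).
Proof. intros Hu. exact (Hu _ sier_open_true). Qed.

(** A discrete space is the Scott space of the equality order. *)
Section Discrete.
Variable A : Type.
Definition eq_le (a b : A) : Prop := a = b.
Definition Disc : Top := scott_space eq_le.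

Lemma disc_open (U : A -> Prop) : open Disc U.
Proof.
  split; [intros x y Ux <-; exact Ux|].
  intros S s [[d Sd] _] [Hub _] Us. exists d. split; [exact Sd|]. rewrite (Hub d Sd). exact Us.
Qed.

(** Directed sets are singletons, so every element is compact. *)
Lemma disc_continuous : continuous_dcpo eq_le.
Proof.
  unfold eq_le. apply continuous_of_compact_elements; [reflexivity| |].
  - split; [auto|split; [intros; congruence|split; [auto|]]].
    intros S [[d Sd] Hd]. exists d. split; [|intros y Hy; exact (Hy d Sd)].
    intros s Ss. destruct (Hd s d Ss Sd) as [c [_ [-> ->]]]. reflexivity.
  - intros x S s [[d Sd] _] [Hub _] Hs. exists d. split; [exact Sd|].
    unfold eq_le in *. rewrite (Hub d Sd); auto.
Qed.

Lemma disc_domain_complete : domain_complete Disc.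
Proof. exact (domain_complete_scott disc_continuous). Qed.

(** A discrete space is Hausdorff, and singletons are compact open neighbourhoods. *)
Lemma disc_LCS_complete : LCS_complete Disc.
Proof.
  apply LCS_complete_self.
  - apply hausdorff_sober. intros x y Hxy. exists (fun z => z = x), (fun z => z = y).
    repeat split; try apply disc_open; try reflexivity. intros z [-> ->]. exact (Hxy eq_refl).
  - intros x U HU Ux. exists (fun z => z = x), (fun z => z = x).
    split; [apply compact_singleton|split; [apply open_saturated, disc_open|split; [apply disc_open|]]].
    split; [reflexivity|split; [auto|intros y ->; exact Ux]].
Qed.
End Discrete.

(** * The space [Ytop] of convergent sequences indexed by a tree *)

(** A point [(s, Some n)] is the n-th term of the sequence at node [s], and
    [(s, None)] is its limit. *)
Definition Ypt := (list nat * option nat)%type.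

Definition Yopen (U : Ypt -> Prop) : Prop :=
  forall s, U (s, None) -> exists N, forall n, N <= n -> U (s, Some n).

Lemma Yopen_full : Yopen (fun _ => True).
Proof. intros s _. exists 0; auto. Qed.

Lemma Yopen_inter U V : Yopen U -> Yopen V -> Yopen (fun x => U x /\ V x).
Proof.
  intros HU HV s [Us Vs]. destruct (HU s Us) as [N1 H1]. destruct (HV s Vs) as [N2 H2].
  exists (max N1 N2). intros n Hn. split; [apply H1|apply H2]; lia.
Qed.

Lemma Yopen_union (F : (Ypt -> Prop) -> Prop) :
  (forall U, F U -> Yopen U) -> Yopen (fun x => exists U, F U /\ U x).
Proof.
  intros HF s [U [FU Us]]. destruct (HF U FU s Us) as [N H].
  exists N. intros n Hn. exists U; auto.
Qed.

Definition Ytop : Top := MkTop Yopen Yopen_full Yopen_inter Yopen_union.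

Lemma Y_term_open s n : open Ytop (fun z => z = (s, Some n)).
Proof. intros t H. discriminate. Qed.

Lemma Y_term_compl_open s n : open Ytop (fun z => z <> (s, Some n)).
Proof. intros t _. exists (S n). intros m Hm E. inversion E. lia. Qed.

Lemma Y_fiber_open s : open Ytop (fun z => fst z = s).
Proof. intros t H. exists 0. intros; exact H. Qed.

(** [Ytop] is Hausdorff: points of different sequences are separated by
    their sequences, a term and any other point by the term itself. *)
Lemma Y_hausdorff : hausdorff Ytop.
Proof.
  intros [s a] [t b] Hne.
  destruct (list_eq_dec Nat.eq_dec s t) as [<-|Hst].
  - destruct a as [n|]; destruct b as [m|].
    + exists (fun z => z = (s, Some n)), (fun z => z = (s, Some m)).
      repeat split; auto using Y_term_open. intros z [-> E]. apply Hne; rewrite E; reflexivity.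
    + exists (fun z => z = (s, Some n)), (fun z => z <> (s, Some n)).
      split; [apply Y_term_open|split; [apply Y_term_compl_open|]].
      split; [reflexivity|split; [discriminate|]]. intros z [H1 H2]; tauto.
    + exists (fun z => z <> (s, Some m)), (fun z => z = (s, Some m)).
      split; [apply Y_term_compl_open|split; [apply Y_term_open|]].
      split; [discriminate|split; [reflexivity|]]. intros z [H1 H2]; tauto.
    + exfalso; apply Hne; reflexivity.
  - exists (fun z => fst z = s), (fun z => fst z = t). repeat split; auto using Y_fiber_open.
    intros z [H1 H2]. apply Hst. congruence.
Qed.

Definition Y_tail (s : list nat) (N : nat) (z : Ypt) : Prop :=
  fst z = s /\ match snd z with None => True | Some m => N <= m end.

Lemma Y_tail_open s N : open Ytop (Y_tail s N).
Proof. intros t [E _]. exists N. intros m Hm. split; [exact E|exact Hm]. Qed.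

Lemma Y_cover_segment (F : (Ypt -> Prop) -> Prop) s N :
  (forall z, Y_tail s N z -> exists U, F U /\ U z) ->
  forall M, exists l, (forall V, In V l -> F V) /\
    forall m, N <= m -> m < M -> exists V, In V l /\ V (s, Some m).
Proof.
  intros Hcov M. induction M as [|M [l [Hl1 Hl2]]].
  - exists nil. split; [intros V []|intros; lia].
  - destruct (le_lt_dec N M) as [HNM|HNM].
    + destruct (Hcov (s, Some M)) as [V [FV VM]]; [split; simpl; auto|].
      exists (V :: l). split; [intros W [<-|HW]; auto|].
      intros m Hm1 Hm2. destruct (Nat.eq_dec m M) as [->|Hne].
      * exists V; split; [left|]; auto.
      * destruct (Hl2 m Hm1 ltac:(lia)) as [W [HW Wm]]. exists W; split; [right|]; auto.
    + exists l. split; [exact Hl1|]. intros m Hm1 Hm2. apply Hl2; lia.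
Qed.

(** A tail is compact: the member of a cover containing the limit contains
    all but finitely many terms. *)
Lemma Y_tail_compact s N : compact Ytop (Y_tail s N).
Proof.
  intros F HF Hcov.
  destruct (Hcov (s, None)) as [U0 [FU0 U0s]]; [split; simpl; auto|].
  destruct (HF U0 FU0 s U0s) as [N0 HN0].
  destruct (Y_cover_segment F s N Hcov N0) as [l [Hl1 Hl2]].
  exists (U0 :: l). split; [intros W [<-|HW]; auto|].
  intros [t [m|]] [E Hm]; simpl in E, Hm; subst t.
  - destruct (le_lt_dec N0 m) as [H0|H0].
    + exists U0; split; [left; reflexivity|exact (HN0 m H0)].
    + destruct (Hl2 m Hm H0) as [W [HW Wm]]. exists W; split; [right|]; auto.
  - exists U0; split; [left; reflexivity|exact U0s].
Qed.

(** Terms have the compact neighbourhood [{term}], limits the tails. *)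
Lemma Y_locally_compact : locally_compact Ytop.
Proof.
  intros [s [n|]] U HU Ux.
  - exists (fun z => z = (s, Some n)), (fun z => z = (s, Some n)).
    split; [apply compact_singleton|split; [apply open_saturated, Y_term_open|]].
    split; [apply Y_term_open|split; [reflexivity|split; [auto|intros y ->; exact Ux]]].
  - destruct (HU s Ux) as [N HN].
    exists (Y_tail s N), (Y_tail s N).
    split; [apply Y_tail_compact|split; [exact (open_saturated _ _ (Y_tail_open s N))|]].
    split; [apply Y_tail_open|split; [split; simpl; auto|split; [auto|]]].
    intros [t [m|]] [E Hm]; simpl in E, Hm; subst t; [exact (HN m Hm)|exact Ux].
Qed.

Lemma Y_LCS_complete : LCS_complete Ytop.
Proof. exact (LCS_complete_self (hausdorff_sober Y_hausdorff) Y_locally_compact). Qed.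

(** * A continuous dcpo containing [Ytop] as a G_delta *)

(** Over each node [s] sits a copy of the dcpo [omega + 1] (the stages
    [Approx k] below [Limit]) with an extra maximal element [Term n] above
    [Approx 0 .. Approx n].  The maximal elements [Term n] and [Limit] form
    a copy of [Ytop]. *)
Inductive stage := Approx (k : nat) | Term (n : nat) | Limit.

Definition stage_le (a b : stage) : Prop :=
  match a, b with
  | Approx k, Approx k' => k <= k'
  | Approx k, Term n => k <= n
  | Approx _, Limit => True
  | Term n, Term m => n = m
  | Limit, Limit => True
  | _, _ => False
  end.

Definition Dpt := (list nat * stage)%type.
Definition dle (x y : Dpt) : Prop := fst x = fst y /\ stage_le (snd x) (snd y).

Lemma dle_refl x : dle x x.
Proof. split; [reflexivity|destruct (snd x); simpl; auto]. Qed.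

Lemma dle_trans x y z : dle x y -> dle y z -> dle x z.
Proof.
  intros [H1 H2] [H3 H4]. split; [congruence|].
  destruct (snd x), (snd y), (snd z); simpl in *; try tauto; lia.
Qed.

Lemma dle_anti x y : dle x y -> dle y x -> x = y.
Proof.
  destruct x as [s a], y as [t b]; intros [H1 H2] [_ H4]; simpl in *; subst.
  f_equal. destruct a, b; simpl in *; try tauto; f_equal; lia.
Qed.

Definition is_approx (x : Dpt) : Prop := exists k, snd x = Approx k.

Lemma dle_maximal x : ~ is_approx x -> forall c, dle x c -> c = x.
Proof.
  destruct x as [s [k|n|]]; intros Hx [t [k'|n'|]] [E L]; simpl in *; subst; try tauto;
    exfalso; apply Hx; exists k; reflexivity.
Qed.

Lemma directed_fiber {S d} : directed dle S -> S d -> forall a, S a -> fst a = fst d.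
Proof.
  intros [_ Hdir] Sd a Sa. destruct (Hdir a d Sa Sd) as [c [_ [[E1 _] [E2 _]]]]. congruence.
Qed.

Lemma approx_unbounded_lub s (S : Dpt -> Prop) :
  (forall a, S a -> exists k, a = (s, Approx k)) ->
  (forall N, exists k, N <= k /\ S (s, Approx k)) -> is_lub dle S (s, Limit).
Proof.
  intros Hshape Hunb. split.
  - intros a Sa. destruct (Hshape a Sa) as [k ->]. split; simpl; auto.
  - intros [t c] Hy. destruct (Hunb 0) as [k0 [_ Sk0]].
    destruct (Hy _ Sk0) as [Et _]. simpl in Et; subst t.
    split; [reflexivity|]. destruct c as [m|m|]; simpl; auto;
      destruct (Hunb (m + 1)) as [k [Hk Sk]]; destruct (Hy _ Sk) as [_ L]; simpl in L; lia.
Qed.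

Lemma bounded_nat_max (P : nat -> Prop) m :
  (exists k, P k) -> (forall k, P k -> k <= m) -> exists k, P k /\ forall j, P j -> j <= k.
Proof.
  revert P. induction m as [|m IH]; intros P [k Pk] Hb.
  - exists k. split; [exact Pk|]. intros j Pj. pose proof (Hb j Pj). pose proof (Hb k Pk). lia.
  - destruct (classic (P (S m))) as [HS|HS].
    + exists (S m). split; [exact HS|exact Hb].
    + apply IH; [exists k; exact Pk|]. intros j Pj. specialize (Hb j Pj).
      destruct (Nat.eq_dec j (S m)) as [->|]; [contradiction|lia].
Qed.

Lemma directed_lub_cases S : directed dle S ->
  (exists a, S a /\ is_lub dle S a) \/
  exists s, is_lub dle S (s, Limit) /\ forall N, exists k, N <= k /\ S (s, Approx k).
Proof.
  intros HS. destruct (proj1 HS) as [d Sd]. set (s := fst d).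
  destruct (classic (exists a, S a /\ ~ is_approx a)) as [[a [Sa Ha]]|Hall].
  { left. exists a. split; [exact Sa|]. exact (directed_maximal_lub HS Sa (dle_maximal a Ha)). }
  assert (Hshape : forall a, S a -> exists k, a = (s, Approx k)).
  { intros [t c] Sa. pose proof (directed_fiber HS Sd _ Sa) as Et. simpl in Et; subst t.
    destruct (classic (is_approx (s, c))) as [[k Hk]|Hn]; [exists k; simpl in Hk; subst; reflexivity|].
    exfalso. apply Hall. exists (s, c). tauto. }
  destruct (classic (exists N, forall k, S (s, Approx k) -> k <= N)) as [[N HN]|Hunb].
  - left. destruct (bounded_nat_max (fun k => S (s, Approx k)) N) as [m [Hm Hmax]]; [|exact HN|].
    { destruct (Hshape _ Sd) as [k Hk]. exists k. rewrite <- Hk. exact Sd. }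
    exists (s, Approx m). split; [exact Hm|]. apply greatest_lub; [exact Hm|].
    intros a Sa. destruct (Hshape a Sa) as [k ->]. split; [reflexivity|exact (Hmax k Sa)].
  - right. exists s.
    assert (Hu : forall N, exists k, N <= k /\ S (s, Approx k)).
    { intros N. apply NNPP; intros Hn. apply Hunb. exists N. intros k Sk.
      apply NNPP; intros Hk. apply Hn. exists k. split; [lia|exact Sk]. }
    split; [exact (approx_unbounded_lub s S Hshape Hu)|exact Hu].
Qed.

Lemma D_dcpo : is_dcpo dle.
Proof.
  split; [exact dle_refl|split; [exact dle_trans|split; [exact dle_anti|]]].
  intros S HS. destruct (directed_lub_cases S HS) as [[a [_ Ha]]|[s [Hs _]]]; eexists; eassumption.
Qed.

Lemma lub_cases S l : directed dle S -> is_lub dle S l ->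
  S l \/ (snd l = Limit /\ forall N, exists k, N <= k /\ S (fst l, Approx k)).
Proof.
  intros HS Hl. destruct (directed_lub_cases S HS) as [[a [Sa Ha]]|[s [Hs Hu]]].
  - left. rewrite (lub_unique dle_anti Hl Ha). exact Sa.
  - right. rewrite (lub_unique dle_anti Hl Hs). split; [reflexivity|exact Hu].
Qed.

Definition approx_chain (s : list nat) (a : Dpt) : Prop := exists k, a = (s, Approx k).

Lemma approx_chain_directed s : directed dle (approx_chain s).
Proof.
  split; [exists (s, Approx 0), 0; reflexivity|].
  intros a b [i ->] [j ->]. exists (s, Approx (max i j)). split; [exists (max i j); reflexivity|].
  split; split; simpl; auto; lia.
Qed.

Lemma approx_chain_lub s : is_lub dle (approx_chain s) (s, Limit).
Proof.
  apply approx_unbounded_lub; [intros a H; exact H|].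
  intros N. exists N. split; [lia|exists N; reflexivity].
Qed.

(** Approximants are way below everything above them: an unbounded chain
    of approximants converging above [Approx k] passes [Approx k]. *)
Lemma approx_way_below s k x : dle (s, Approx k) x -> way_below dle (s, Approx k) x.
Proof.
  intros Hx S l HS Hl Hxl. assert (Hkl := dle_trans _ _ _ Hx Hxl).
  destruct (lub_cases S l HS Hl) as [Sl|[El Hu]]; [exists l; tauto|].
  destruct (Hu k) as [k' [Hk' Sk']]. exists (fst l, Approx k'). split; [exact Sk'|].
  split; [exact (proj1 Hkl)|exact Hk'].
Qed.

Lemma term_compact s n : way_below dle (s, Term n) (s, Term n).
Proof.
  intros S l HS Hl Hxl. destruct (lub_cases S l HS Hl) as [Sl|[El _]]; [exists l; tauto|].
  destruct Hxl as [_ L]. rewrite El in L. destruct L.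
Qed.

(** Limits are not compact: they are sups of their approximant chains. *)
Lemma limit_not_compact s : ~ way_below dle (s, Limit) (s, Limit).
Proof.
  intros H. destruct (H _ _ (approx_chain_directed s) (approx_chain_lub s) (dle_refl _))
    as [d [[k ->] [_ L]]].
  exact L.
Qed.

(** [dle] is a continuous dcpo: terms and approximants are compact, and a
    limit is the sup of the approximants way below it. *)
Lemma D_continuous : continuous_dcpo dle.
Proof.
  split; [exact D_dcpo|]. intros [s [k|n|]].
  - apply compact_element_approx; [exact dle_refl|apply approx_way_below, dle_refl].
  - apply compact_element_approx; [exact dle_refl|apply term_compact].
  -
    assert (Hwb : forall a, way_below dle a (s, Limit) <-> approx_chain s a).
    { intros [t c]; split.
      - intros Ha. destruct (way_below_le _ _ dle_refl _ _ Ha) as [Et L]. simpl in Et, L; subst t.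
        destruct c as [k|m|]; [exists k; reflexivity|destruct L|exfalso; exact (limit_not_compact s Ha)].
      - intros [k E]. rewrite E. apply approx_way_below. split; simpl; auto. }
    split.
    + split; [exists (s, Approx 0); apply Hwb; exists 0; reflexivity|].
      intros a b Ha Hb. apply Hwb in Ha, Hb.
      destruct (proj2 (approx_chain_directed s) a b Ha Hb) as [c [Hc Hle]].
      exists c. split; [apply Hwb; exact Hc|exact Hle].
    + split; [intros a Ha; apply Hwb in Ha; exact (proj1 (approx_chain_lub s) a Ha)|].
      intros y Hy. apply (proj2 (approx_chain_lub s)). intros a Ha. apply Hy, Hwb, Ha.
Qed.

(** [Ytop] sits in [Dpt] as the set of non-approximants, the intersection of
    the Scott-open sets [no_approx_below k]. *)
Definition no_approx_below (k : nat) (d : Dpt) : Prop := ~ exists j, j <= k /\ snd d = Approx j.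

Lemma no_approx_below_open k : scott_open dle (no_approx_below k).
Proof.
  split.
  - intros [s a] y Hx [E L] [j [Hj Ey]]. apply Hx. simpl in *. rewrite Ey in L.
    destruct a as [i|i|]; simpl in L; try tauto. exists i. split; [lia|reflexivity].
  - intros S l HS Hl Hu. destruct (lub_cases S l HS Hl) as [Sl|[El Hunb]]; [exists l; tauto|].
    destruct (Hunb (k + 1)) as [k' [Hk' Sk']]. exists (fst l, Approx k'). split; [exact Sk'|].
    intros [j [Hj E]]. simpl in E. injection E as ->. lia.
Qed.

Lemma non_approx_G_delta : @G_delta (scott_space dle) (fun d => ~ is_approx d).
Proof.
  exists no_approx_below. split; [exact no_approx_below_open|].
  intros [s [i|i|]]; split.
  - intros H. exfalso. apply H. exists i; reflexivity.
  - intros H. exfalso. apply (H i). exists i. split; [lia|reflexivity].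
  - intros _ n [j [_ E]]; discriminate.
  - intros _ [j E]; discriminate.
  - intros _ n [j [_ E]]; discriminate.
  - intros _ [j E]; discriminate.
Qed.

Definition embed (y : Ypt) : Dpt :=
  match snd y with Some n => (fst y, Term n) | None => (fst y, Limit) end.

Definition unembed (d : Dpt) : Ypt :=
  match snd d with Term n => (fst d, Some n) | _ => (fst d, None) end.

Lemma embed_non_approx y : ~ is_approx (embed y).
Proof. destruct y as [s [n|]]; intros [k E]; discriminate. Qed.

Lemma unembed_embed y : unembed (embed y) = y.
Proof. destruct y as [s [n|]]; reflexivity. Qed.

Lemma embed_unembed d : ~ is_approx d -> embed (unembed d) = d.
Proof.
  destruct d as [s [i|i|]]; intros H; [exfalso; apply H; exists i|..]; reflexivity.
Qed.

(** An open set [V] of [Ytop] extends to a Scott-open set: an approximant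
    [Approx k] over [s] belongs to it when the limit and all terms from
    index [k] on are in [V]. *)
Definition scott_extension (V : Ypt -> Prop) (d : Dpt) : Prop :=
  match snd d with
  | Approx k => V (fst d, None) /\ forall n, k <= n -> V (fst d, Some n)
  | Term n => V (fst d, Some n)
  | Limit => V (fst d, None)
  end.

Lemma scott_extension_open V : Yopen V -> scott_open dle (scott_extension V).
Proof.
  intros HV. split.
  - intros [s a] [t b] Hx [E L]. simpl in E; subst t.
    destruct a as [k|n|], b as [k'|n'|]; unfold scott_extension in *; simpl in *; try tauto.
    + split; [tauto|]. intros n Hn. apply Hx. lia.
    + apply Hx. exact L.
    + subst; exact Hx.
  - intros S l HS Hl Hx. destruct (lub_cases S l HS Hl) as [Sl|[El Hunb]]; [exists l; tauto|].
    unfold scott_extension in Hx. rewrite El in Hx.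
    destruct (HV _ Hx) as [N HN]. destruct (Hunb N) as [k [Hk Sk]].
    exists (fst l, Approx k). split; [exact Sk|]. split; [exact Hx|].
    intros n Hn. apply HN. lia.
Qed.

(** Preimages of Scott-open sets under [embed] are open in [Ytop]: a Scott
    open set containing a limit contains one of its approximants. *)
Lemma embed_preimage_open U : scott_open dle U -> Yopen (fun y => U (embed y)).
Proof.
  intros [Hup Hin] s Hs. simpl in Hs.
  destruct (Hin _ _ (approx_chain_directed s) (approx_chain_lub s) Hs) as [d [[N ->] UN]].
  exists N. intros n Hn. simpl. apply (Hup (s, Approx N)); [exact UN|]. split; simpl; auto.
Qed.

Lemma Y_domain_complete : domain_complete Ytop.
Proof.
  exists Dpt, dle. split; [exact D_continuous|].
  exists (fun d => ~ is_approx d). split; [exact non_approx_G_delta|].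
  exists (fun y => exist _ (embed y) (embed_non_approx y)), (fun z => unembed (proj1_sig z)).
  split; [|split; [|split]].
  - intros V [U [HU HVU]]. apply (open_ext Ytop (fun y => U (embed y))).
    + intros y. symmetry. exact (HVU (exist _ (embed y) (embed_non_approx y))).
    + exact (embed_preimage_open U HU).
  - intros V HV. exists (scott_extension V). split; [exact (scott_extension_open V HV)|].
    intros [[s [i|i|]] Hd]; simpl; [exfalso; apply Hd; exists i; reflexivity|tauto|tauto].
  - intros y. apply unembed_embed.
  - intros [d Hd]. apply eq_sig_hprop; [intros; apply proof_irrelevance|]. exact (embed_unembed _ Hd).
Qed.

(** * Separation in the tree [list nat] *)

(** A set of nodes is open if with every node it contains almost all of its
    children; these are the sets whose limit points form an open set of
    [Ytop] (see [open_of_tree_open]). *)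
Definition tree_open (A : list nat -> Prop) : Prop :=
  forall s, A s -> exists N, forall n, N <= n -> A (n :: s).

Lemma tree_open_deep A t : tree_open A -> A t -> forall m, exists d, A d /\ m + length t <= length d.
Proof.
  intros HA At m. induction m as [|m [d [Ad Hd]]]; [exists t; split; [exact At|lia]|].
  destruct (HA d Ad) as [N HN]. exists (N :: d). split; [apply HN; lia|simpl; lia].
Qed.

Definition descendant (s u : list nat) : Prop := exists p, u = p ++ s.

Lemma descendant_open s : tree_open (descendant s).
Proof. intros u [p ->]. exists 0. intros n _. exists (n :: p). reflexivity. Qed.

Definition tree_separated (s t : list nat) : Prop :=
  exists A B, tree_open A /\ tree_open B /\ A s /\ B t /\ forall u, ~ (A u /\ B u).

Lemma tree_separated_sym {s t} : tree_separated s t -> tree_separated t s.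
Proof.
  intros [A [B [HA [HB [As [Bt Hd]]]]]]. exists B, A.
  repeat split; auto. intros u [H1 H2]. exact (Hd u (conj H2 H1)).
Qed.

(** A proper descendant [t = p ++ [a] ++ s] is separated from [s] by the
    subtree at child [a] and the descendants of [s] outside it. *)
Lemma separate_descendant {s t} : descendant s t -> s <> t -> tree_separated s t.
Proof.
  intros [p Hp] Hne. destruct p as [|a p'] using rev_ind; [simpl in Hp; congruence|].
  rewrite <- app_assoc in Hp. simpl in Hp.
  exists (fun u => descendant s u /\ ~ descendant (a :: s) u), (descendant (a :: s)).
  split; [|split; [apply descendant_open|split; [split|split]]].
  - intros u [[q ->] Hn]. exists (S a). intros n Hn'. split; [exists (n :: q); reflexivity|].
    intros [r Hr]. destruct r as [|b r]; simpl in Hr; [inversion Hr; lia|].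
    injection Hr as _ H1. apply Hn. exists r. exact H1.
  - exists nil; reflexivity.
  - intros [r Hr]. assert (E := f_equal (@length nat) Hr). rewrite length_app in E. simpl in E. lia.
  - exists p'. exact Hp.
  - intros u [[_ H1] H2]. tauto.
Qed.

(** Distinct nodes are separated: either one descends from the other, or
    their sets of descendants are disjoint. *)
Lemma separate_nodes {s t} : s <> t -> tree_separated s t.
Proof.
  intros Hne.
  destruct (classic (descendant s t)) as [Hst|Hst]; [exact (separate_descendant Hst Hne)|].
  destruct (classic (descendant t s)) as [Hts|Hts].
  { exact (tree_separated_sym (separate_descendant Hts (fun e => Hne (eq_sym e)))). }
  exists (descendant s), (descendant t).
  split; [apply descendant_open|split; [apply descendant_open|]].
  split; [exists nil; reflexivity|split; [exists nil; reflexivity|]].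
  intros u [[p Hp] [p' Hp']]. rewrite Hp' in Hp. apply app_eq_app in Hp.
  destruct Hp as [l [[_ E]|[_ E]]]; [apply Hts|apply Hst]; exists l; exact E.
Qed.

(** * The pair of maps without a coequalizer *)

(** [f0 (s, n)] is the n-th term of the sequence at [s], [g0 (s, n)] the
    limit of the sequence at the child [n :: s]; the coequalizer in [Top]
    would glue these.  [node y] is the node whose limit [y] is glued to. *)
Definition X0 : Top := Disc (list nat * nat).
Definition f0 (x : X0) : Ytop := (fst x, Some (snd x)).
Definition g0 (x : X0) : Ytop := (snd x :: fst x, None).
Definition node (y : Ypt) : list nat := match snd y with Some n => n :: fst y | None => fst y end.

(** Maps out of a discrete space are continuous. *)
Lemma f0_continuous : continuous f0.
Proof. intros V _. apply disc_open. Qed.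

Lemma g0_continuous : continuous g0.
Proof. intros V _. apply disc_open. Qed.

Section NoCoequalizer.
Variables (P : Top -> Prop) (Q : Top) (q : Ytop -> Q).
Hypothesis P_sier : P Sier.
Hypothesis coeq : @is_coequalizer P X0 Ytop f0 g0 Q q.

Lemma q_limit y : q y = q (node y, None).
Proof.
  destruct coeq as [_ [_ [Hglue _]]].
  destruct y as [s [n|]]; [exact (Hglue (s, n))|reflexivity].
Qed.

(** Open sets of [Q] are determined by their preimages, since maps into
    Sierpinski space factor uniquely through [q]. *)
Lemma open_determined (O1 O2 : Q -> Prop) : open Q O1 -> open Q O2 ->
  (forall y, O1 (q y) <-> O2 (q y)) -> forall z, O1 z <-> O2 z.
Proof.
  intros H1 H2 Hy z.
  destruct coeq as [_ [Hq [Hglue Huniv]]].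
  destruct (Huniv Sier (fun y => indicator O1 (q y)) P_sier
              (continuous_comp q _ Hq (indicator_continuous O1 H1))) as [u [_ [_ Huniq]]].
  { intros x. rewrite Hglue. reflexivity. }
  pose proof (Huniq (indicator O1) (indicator_continuous O1 H1) (fun y => eq_refl) z) as E1.
  pose proof (Huniq (indicator O2) (indicator_continuous O2 H2)
                (fun y => indicator_iff _ _ _ _ (iff_sym (Hy y))) z) as E2.
  rewrite <- (indicator_true O1 z), <- (indicator_true O2 z), E1, E2. reflexivity.
Qed.

(** Every open set of nodes gives an open set of [Q], through the map to
    Sierpinski space induced by its (glueing-invariant) indicator. *)
Lemma open_of_tree_open A : tree_open A ->
  exists O, open Q O /\ forall y, O (q y) <-> A (node y).
Proof.
  intros HA.
  assert (HAo : open Ytop (fun y => A (node y))).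
  { intros s As. destruct (HA s As) as [N HN]. exists N. intros n Hn. exact (HN n Hn). }
  destruct coeq as [_ [_ [_ Huniv]]].
  destruct (Huniv Sier (indicator (fun y : Ytop => A (node y))) P_sier (indicator_continuous _ HAo))
    as [u [Hu [Huq _]]].
  { intros x. apply indicator_iff. reflexivity. }
  exists (fun z => u z = true). split; [exact (continuous_to_sier u Hu)|].
  intros y. rewrite Huq. exact (indicator_true (fun y : Ytop => A (node y)) y).
Qed.

Lemma open_preimage_tree_open O : open Q O -> tree_open (fun s => O (q (s, None))).
Proof.
  intros HO s Os. destruct coeq as [_ [Hq [Hglue _]]].
  destruct (Hq O HO s Os) as [N HN]. exists N. intros n Hn.
  change (O (q (g0 (s, n)))). rewrite <- Hglue. exact (HN n Hn).
Qed.

Lemma open_meets_image O z : open Q O -> O z -> exists s, O (q (s, None)).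
Proof.
  intros HO Oz. apply NNPP; intros Hn.
  refine (proj1 (open_determined O (fun _ => False) HO (open_empty Q) _ z) Oz).
  intros y. split; [|tauto]. intros Oy. apply Hn. exists (node y). rewrite <- q_limit. exact Oy.
Qed.

Lemma separate_images {s t} : tree_separated s t ->
  exists A B, open Q A /\ open Q B /\ A (q (s, None)) /\ B (q (t, None)) /\
    forall w, ~ (A w /\ B w).
Proof.
  intros [A [B [HA [HB [As [Bt Hd]]]]]].
  destruct (open_of_tree_open A HA) as [Aq [HAq HAq']].
  destruct (open_of_tree_open B HB) as [Bq [HBq HBq']].
  exists Aq, Bq. split; [exact HAq|split; [exact HBq|]].
  split; [exact (proj2 (HAq' (s, None)) As)|split; [exact (proj2 (HBq' (t, None)) Bt)|]].
  intros w Hw.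
  refine (proj1 (open_determined (fun w => Aq w /\ Bq w) (fun _ => False)
                   (open_inter Q _ _ HAq HBq) (open_empty Q) _ w) Hw).
  intros y. split; [|tauto]. intros [H1 H2].
  exact (Hd (node y) (conj (proj1 (HAq' y) H1) (proj1 (HBq' y) H2))).
Qed.

Lemma depth_opens : exists V : nat -> Q -> Prop,
  (forall k, open Q (V k)) /\ forall k y, V k (q y) <-> k < length (node y).
Proof.
  destruct (choice (fun k (O : Q -> Prop) =>
              open Q O /\ forall y, O (q y) <-> k < length (node y))) as [V HV].
  { intros k. apply (open_of_tree_open (fun s => k < length s)).
    intros s Hs. exists 0. intros n _. simpl. lia. }
  exists V. split; intros k; apply HV.
Qed.

(** They are dense: every nonempty open set contains limits at arbitrarily
    deep nodes. *)
Lemma depth_dense (V : nat -> Q -> Prop) :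
  (forall k y, V k (q y) <-> k < length (node y)) ->
  forall k O, open Q O -> (exists z, O z) -> exists z, O z /\ V k z.
Proof.
  intros HVq k O HO [z Oz].
  destruct (open_meets_image O z HO Oz) as [s Os].
  destruct (tree_open_deep _ _ (open_preimage_tree_open O HO) Os (S k)) as [d [Od Hd]].
  exists (q (d, None)). split; [exact Od|]. apply HVq. change (k < length d). lia.
Qed.

(** If [q (t, None)] specializes to [z], they have the same neighbourhoods:
    an open set around [z] missing [q (t, None)] is covered by open sets
    disjoint from neighbourhoods of [q (t, None)]. *)
Lemma specialization_symmetric t z :
  (forall O, open Q O -> O (q (t, None)) -> O z) ->
  forall O, open Q O -> O z -> O (q (t, None)).
Proof.
  intros Ht O HO Oz. apply NNPP; intros nOt.
  set (F := fun M : Q -> Prop => exists A B, open Q A /\ open Q B /\ A (q (t, None)) /\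
              (forall w, ~ (A w /\ B w)) /\ M = (fun w => B w /\ O w)).
  assert (HF : forall M, F M -> open Q M).
  { intros M [A [B [_ [HB [_ [_ ->]]]]]]. exact (open_inter Q _ _ HB HO). }
  assert (Hpre : forall y, (exists M, F M /\ M (q y)) <-> O (q y)).
  { intros y. split; [intros [M [[A [B [_ [_ [_ [_ ->]]]]]] [_ Oy]]]; exact Oy|].
    intros Oy. rewrite q_limit in Oy |- *.
    assert (Hne : t <> node y) by (intros E; rewrite <- E in Oy; contradiction).
    destruct (separate_images (separate_nodes Hne)) as [A [B [HA [HB [At [By Hd]]]]]].
    exists (fun w => B w /\ O w). split; [|split; [exact By|exact Oy]].
    exists A, B. repeat split; assumption. }
  destruct (proj2 (open_determined _ O (open_union Q F HF) HO Hpre z) Oz)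
    as [M [[A [B [HA [_ [At [Hdis ->]]]]]] [Bz _]]].
  exact (Hdis z (conj (Ht A HA At) Bz)).
Qed.

(** Every point of [Q] is a specialization of the image of some limit:
    otherwise the open sets missing [z] would cover [Q]. *)
Lemma specializes_from_node z : exists t, forall O, open Q O -> O (q (t, None)) -> O z.
Proof.
  apply NNPP; intros Hnt.
  set (F := fun M : Q -> Prop => open Q M /\ ~ M z).
  assert (Hpre : forall y, (exists M, F M /\ M (q y)) <-> True).
  { intros y. split; [auto|intros _].
    apply NNPP; intros Hn. apply Hnt. exists (node y). intros O HO Ot.
    apply NNPP; intros nOz. apply Hn. exists O. split; [split; assumption|].
    rewrite q_limit. exact Ot. }
  destruct (proj2 (open_determined _ _ (open_union Q F (fun M HM => proj1 HM)) (open_full Q) Hpre z) I)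
    as [M [[_ nMz] Mz]].
  exact (nMz Mz).
Qed.

(** A point in all the dense open sets "depth > k" would share its
    neighbourhoods with the image of a limit at a node of finite depth. *)
Lemma coequalizer_not_baire : ~ baire Q.
Proof.
  intros Hb. destruct depth_opens as [V [HV HVq]].
  destruct (Hb V HV (depth_dense V HVq) (ex_intro _ (q (nil, None)) I)) as [z Hz].
  destruct (specializes_from_node z) as [t Ht].
  pose proof (specialization_symmetric t z Ht (V (length t)) (HV _) (Hz _)) as H.
  apply HVq in H. change (length t < length t) in H. lia.
Qed.
End NoCoequalizer.

Lemma no_coequalizer {P : Top -> Prop} : P Sier -> (forall Q, P Q -> baire Q) ->
  ~ (exists (Q : Top) (q : Ytop -> Q), @is_coequalizer P X0 Ytop f0 g0 Q q).
Proof.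
  intros HS Hb [Q [q Hcoeq]].
  exact (coequalizer_not_baire P Q q HS Hcoeq (Hb Q (proj1 Hcoeq))).
Qed.

Theorem proposition15p3 :
  lacks_some_coequalizer domain_complete /\ lacks_some_coequalizer LCS_complete.
Proof.
  split; exists X0, Ytop, f0, g0.
  - split; [apply disc_domain_complete|split; [exact Y_domain_complete|]].
    split; [exact f0_continuous|split; [exact g0_continuous|]].
    exact (no_coequalizer sier_domain_complete domain_complete_baire).
  - split; [apply disc_LCS_complete|split; [exact Y_LCS_complete|]].
    split; [exact f0_continuous|split; [exact g0_continuous|]].
    exact (no_coequalizer sier_LCS_complete LCS_complete_baire).
Qed.
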